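(* Let $R$ be a commutative ring. (1) Every $w$-split $R$-module is $w$-projective. (2) Let $0\to A\to B\to C\to 0$ be an exact sequence of $R$-modules with $C$ $w$-split. Then $A$ is $w$-split if and only if $B$ is $w$-split.
   Context: $R$ is a commutative ring with identity. For an $R$-module $M$ and $s\in R$, $\eta^M_s:M\to M$ is multiplication by $s$. GV-ideals and torsion: - An ideal $J$ of $R$ is a GV-ideal if $J$ is finitely generated and the natural map $R\to\mathrm{Hom}_R(J,R)$ is an isomorphism. $\mathrm{GV}(R)$ is the set of GV-ideals. - $\mathrm{tor_{GV}}(M)=\{x\in M: Jx=0\text{ for some }J\in\mathrm{GV}(R)\}$. - $M$ is GV-torsion if $\mathrm{tor_{GV}}(M)=M$, and GV-torsionfree if $\mathrm{tor_{GV}}(M)=0$. $w$-modules and $w$-projectivity: - A GV-torsionfree $M$ is a $w$-module if $\mathrm{Ext}^1_R(R/J,M)=0$ for all $J\in\mathrm{GV}(R)$. - For GV-torsionfree $M$, $M_w=\{x\in E(M): Jx\subseteq M\text{ for some }J\in\mathrm{GV}(R)\}$, where $E(M)$ is the injective envelope. - $M$ is $w$-projective if $\mathrm{Ext}^1_R(L(M),N)$ is GV-torsion for every torsionfree $w$-module $N$, where $L(M)=(M/\mathrm{tor_{GV}}(M))_w$. $w$-split: - A short exact sequence $0\to A\xrightarrow{f}B\xrightarrow{g}C\to 0$ is $w$-split if there exist $J=\langle d_1,\dots,d_n\rangle\in\mathrm{GV}(R)$ and $h_1,\dots,h_n\in\mathrm{Hom}_R(C,B)$ with $gh_k=\eta^C_{d_k}$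 for all $k$. - $M$ is $w$-split if there is a $w$-split exact sequence $0\to K\to P\to M\to 0$ with $P$ projective. *)

(* R-modules are MathComp left modules [lmodType R] over a
   commutative ring [R : comPzRingType] (ring with identity, possibly 0 = 1);
   R-linear maps are [{linear U -> V}]. *)
From HB Require Import structures.
From mathcomp Require Import all_boot all_order all_algebra.
Set Implicit Arguments. Unset Strict Implicit. Unset Printing Implicit Defensive.
Import GRing.Theory.
Local Open Scope ring_scope.

Section WTheory.
Variable R : comPzRingType.

Definition in_ideal (d : seq R) (x : R) : Prop :=
  exists c : 'I_(size d) -> R, x = \sum_(i < size d) c i * d`_i.

(* J = <d> is a GV-ideal: the natural map R -> Hom_R(J,R), r |-> (x |-> r x),
   is injective and surjective. *)
Definition is_GV (d : seq R) : Prop :=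
  (forall r : R, (forall x, in_ideal d x -> r * x = 0) -> r = 0) /\
  (forall phi : R -> R,
     (forall a x y, in_ideal d x -> in_ideal d y ->
        phi (a * x + y) = a * phi x + phi y) ->
     exists r : R, forall x, in_ideal d x -> phi x = r * x).

Definition in_tor_GV (M : lmodType R) (x : M) : Prop :=
  exists d : seq R, is_GV d /\ forall j, in_ideal d j -> j *: x = 0.

Definition GV_torsion (M : lmodType R) : Prop := forall x : M, in_tor_GV x.
Definition GV_torsionfree (M : lmodType R) : Prop :=
  forall x : M, in_tor_GV x -> x = 0.

Definition short_exact (A B C : lmodType R)
    (f : {linear A -> B}) (g : {linear B -> C}) : Prop :=
  injective f /\ (forall c, exists b, g b = c) /\
  (forall b, g b = 0 <-> exists a, b = f a).

Definition projective_mod (P : lmodType R) : Prop :=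
  forall (X Y : lmodType R) (p : {linear X -> Y}) (u : {linear P -> Y}),
    (forall y, exists x, p x = y) ->
    exists h : {linear P -> X}, forall z, p (h z) = u z.

Definition injective_mod (E : lmodType R) : Prop :=
  forall (X Y : lmodType R) (i : {linear X -> Y}) (u : {linear X -> E}),
    injective i ->
    exists h : {linear Y -> E}, forall z, h (i z) = u z.

Definition submod_pred (E : lmodType R) (S : E -> Prop) : Prop :=
  S 0 /\ (forall x y, S x -> S y -> S (x + y)) /\
  (forall (a : R) x, S x -> S (a *: x)).

(* e : Q -> E is an injective envelope of Q: E injective, e a monomorphism,
   and e(Q) is essential in E. *)
Definition inj_envelope (Q E : lmodType R) (e : {linear Q -> E}) : Prop :=
  injective_mod E /\ injective e /\
  forall S : E -> Prop, submod_pred S -> (exists x, S x /\ x <> 0) ->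
    exists x, S x /\ x <> 0 /\ exists q, x = e q.

(* Ext^1_R(L,N) is computed from a projective presentation
   0 -> K -i-> P -p-> L -> 0 (P projective) as
   Hom_R(K,N) / image(Hom_R(P,N) -> Hom_R(K,N)); the class of phi is 0 iff
   phi extends along i, and s.[phi] = [s phi].  This is independent of the
   presentation, so we quantify over all of them. *)
Definition proj_pres (L K P : lmodType R)
    (i : {linear K -> P}) (p : {linear P -> L}) : Prop :=
  short_exact i p /\ projective_mod P.

Definition Ext1_zero (L N : lmodType R) : Prop :=
  forall (K P : lmodType R) (i : {linear K -> P}) (p : {linear P -> L}),
    proj_pres i p ->
    forall phi : {linear K -> N},
      exists psi : {linear P -> N}, forall k, psi (i k) = phi k.

Definition Ext1_GV_torsion (L N : lmodType R) : Prop :=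
  forall (K P : lmodType R) (i : {linear K -> P}) (p : {linear P -> L}),
    proj_pres i p ->
    forall phi : {linear K -> N},
      exists d : seq R, is_GV d /\
        forall j, in_ideal d j ->
          exists psi : {linear P -> N}, forall k, psi (i k) = j *: phi k.

Definition is_quot_by_ideal (d : seq R) (Q : lmodType R)
    (q : {linear R^o -> Q}) : Prop :=
  (forall y, exists r, q r = y) /\ (forall r, q r = 0 <-> in_ideal d r).

Definition w_module (N : lmodType R) : Prop :=
  GV_torsionfree N /\
  forall d : seq R, is_GV d ->
    forall (Q : lmodType R) (q : {linear R^o -> Q}),
      is_quot_by_ideal d q -> Ext1_zero Q N.

(* A realization of L(M): q : M -> Q surjective with kernel tor_GV(M)
   (so Q = M/tor_GV(M)), e : Q -> E an injective envelope, and
   l : L -> E injective with image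
   (Q)_w = { x in E | J x \subseteq e(Q) for some GV-ideal J }. *)
Definition is_LM (M Q E L : lmodType R) (q : {linear M -> Q})
    (e : {linear Q -> E}) (l : {linear L -> E}) : Prop :=
  (forall y, exists x, q x = y) /\ (forall x, q x = 0 <-> in_tor_GV x) /\
  inj_envelope e /\ injective l /\
  (forall x : E, (exists z, x = l z) <->
     exists d : seq R, is_GV d /\
       forall j, in_ideal d j -> exists y, j *: x = e y).

Definition w_projective (M : lmodType R) : Prop :=
  forall (Q E L : lmodType R) (q : {linear M -> Q})
         (e : {linear Q -> E}) (l : {linear L -> E}),
    is_LM q e l ->
    forall N : lmodType R, GV_torsionfree N -> w_module N ->
      Ext1_GV_torsion L N.

Definition w_split_seq (A B C : lmodType R)
    (f : {linear A -> B}) (g : {linear B -> C}) : Prop :=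
  exists d : seq R, is_GV d /\
    exists h : 'I_(size d) -> {linear C -> B},
      forall k c, g (h k c) = d`_k *: c.

Definition w_split (M : lmodType R) : Prop :=
  exists (K P : lmodType R) (f : {linear K -> P}) (g : {linear P -> M}),
    short_exact f g /\ projective_mod P /\ w_split_seq f g.

End WTheory.

(* Write "c splits M" when multiplication by c on M factors through a
   projective module; M is w-split iff the generators of some GV-ideal split M.

   (1) Let c split M and let phi : K -> N represent a class of Ext^1(L(M), N),
   with pushout 0 -> N -> X -> L(M) -> 0.  Projectivity lifts c times
   M -> L(M) to X; the lift kills tor_GV(M) because ker(X -> L(M)) = N is
   GV-torsionfree, and it extends from M/tor_GV(M) to L(M) because
   L(M)/(M/tor_GV(M)) is GV-torsion and N is a w-module.  A lift of c
   times the identity of L(M) to X makes c phi extend, so the GV-ideal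
   generated by the splitting elements kills the class.

   (2) If c splits C in 0 -> A -f-> B -g-> C -> 0, there is rho : B -> A with
   rho f = c and c - f rho factoring through a projective.  Hence if a splits
   A (resp. b splits B) then ac splits B (resp. bc splits A), and products of
   GV-ideals are GV-ideals. *)

From HB Require Import structures.
From mathcomp Require Import all_boot all_order all_algebra.
From mathcomp Require Import finmap boolp ring.
From mathcomp.multinomials Require Import monalg.
Set Implicit Arguments. Unset Strict Implicit. Unset Printing Implicit Defensive.
Import GRing.Theory.
Local Open Scope ring_scope.

Section LinearMaps.
Variable R : comPzRingType.
Implicit Types U V W : lmodType R.

Definition mk_linear U V (f : U -> V) (fL : linear f) : {linear U -> V} :=
  HB.pack f (GRing.isLinear.Build R U V *:%R f fL).

Lemma linear_factor_inj U V W (i : {linear U -> W}) (F : {linear V -> W}) :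
  injective i -> (forall x, exists u, F x = i u) ->
  exists G : {linear V -> U}, forall x, i (G x) = F x.
Proof.
move=> i_inj /choice [G HG].
have GL : linear G by move=> a x y; apply: i_inj; rewrite linearP -!HG linearP.
by exists (mk_linear GL) => x; rewrite HG.
Qed.

Lemma linear_factor_surj U V W (p : {linear U -> V}) (F : {linear U -> W}) :
  (forall v, exists u, p u = v) -> (forall u, p u = 0 -> F u = 0) ->
  exists G : {linear V -> W}, forall u, G (p u) = F u.
Proof.
move=> /choice [s Hs] F0.
have Fp u u' : p u = p u' -> F u = F u'.
  by move=> e; apply/eqP; rewrite -subr_eq0 -linearB F0 // linearB e subrr.
have GL : linear (F \o s).
  by move=> a v v'; rewrite /= -linearP; apply: Fp; rewrite !linearP !Hs.
by exists (mk_linear GL) => u; apply: Fp; rewrite Hs.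
Qed.

Fact pair_linear U V W (f : {linear U -> V}) (g : {linear U -> W}) :
  linear (fun x => (f x, g x)).
Proof. by move=> a x y; rewrite !linearP. Qed.

Definition lin_pair U V W (f : {linear U -> V}) (g : {linear U -> W}) :
  {linear U -> (V * W)%type} := mk_linear (pair_linear f g).

Lemma ker_submod U V (f : {linear U -> V}) : submod_pred (fun u => f u = 0).
Proof.
split; first exact: linear0.
split=> [x y /= fx fy | a x /= fx]; first by rewrite linearD fx fy addr0.
by rewrite linearZ_LR fx scaler0.
Qed.

End LinearMaps.

Section Ideals.
Variable R : comPzRingType.
Implicit Types (d : seq R) (a r x y : R).

Lemma in_ideal0 d : in_ideal d 0.
Proof. by exists (fun _ => 0); rewrite big1 // => i _; rewrite mul0r. Qed.

Lemma in_idealD d x y : in_ideal d x -> in_ideal d y -> in_ideal d (x + y).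
Proof.
move=> [c ->] [c' ->]; exists (fun i => c i + c' i).
by rewrite -big_split; apply: eq_bigr => i _; rewrite mulrDl.
Qed.

Lemma in_idealMl d r x : in_ideal d x -> in_ideal d (r * x).
Proof.
move=> [c ->]; exists (fun i => r * c i).
by rewrite mulr_sumr; apply: eq_bigr => i _; rewrite mulrA.
Qed.

Lemma in_ideal_mem d x : x \in d -> in_ideal d x.
Proof.
move=> xd; pose i := Ordinal (etrans (index_mem x d) xd).
exists (fun k => (k == i)%:R); rewrite (bigD1 i) //= eqxx mul1r nth_index //.
by rewrite big1 ?addr0 // => k /negbTE ->; rewrite mul0r.
Qed.

Lemma in_ideal_submod d : submod_pred (in_ideal d : R^o -> Prop).
Proof.
split; first exact: in_ideal0.
by split=> [x y|a x]; [exact: in_idealD | exact: in_idealMl].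
Qed.

Lemma in_ideal_ind d (S : R -> Prop) :
  S 0 -> (forall x y, S x -> S y -> S (x + y)) -> (forall r x, S x -> S (r * x)) ->
  (forall x, x \in d -> S x) -> forall x, in_ideal d x -> S x.
Proof.
move=> S0 SD SM Sd _ [c ->]; elim/big_rec: _ => // i y _ Sy.
by apply: SD Sy; apply: SM; apply: Sd; exact: mem_nth.
Qed.

Definition ideal_hom d (phi : R -> R) :=
  forall a x y, in_ideal d x -> in_ideal d y -> phi (a * x + y) = a * phi x + phi y.

Lemma ideal_hom0 d phi : ideal_hom d phi -> phi 0 = 0.
Proof.
by move/(_ (-1) 0 0 (in_ideal0 d) (in_ideal0 d)); rewrite mulr0 add0r mulN1r addNr.
Qed.

Lemma GV_one : is_GV [:: 1 : R].
Proof.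
have one1 x : in_ideal [:: 1] x by rewrite -[x]mulr1; exact/in_idealMl/in_ideal_mem/mem_head.
split; first by move=> r /(_ 1 (one1 1)); rewrite mulr1.
move=> phi phiL; exists (phi 1) => x _.
by rewrite -[in LHS](addr0 x) -[in LHS](mulr1 x) phiL // (ideal_hom0 phiL) addr0 mulrC.
Qed.

Section GVProduct.
Variables d1 d2 : seq R.
Let d := [seq a * b | a <- d1, b <- d2].

Lemma in_ideal_prod a b : in_ideal d1 a -> in_ideal d2 b -> in_ideal d (a * b).
Proof.
move=> ha hb; elim/in_ideal_ind: ha => [|x y|r x|x xd].
- by rewrite mul0r; exact: in_ideal0.
- by rewrite mulrDl; exact: in_idealD.
- by rewrite -mulrA; exact: in_idealMl.
elim/in_ideal_ind: hb => [|y y'|r y|y yd].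
- by rewrite mulr0; exact: in_ideal0.
- by rewrite mulrDr; exact: in_idealD.
- by rewrite mulrCA; exact: in_idealMl.
by apply: in_ideal_mem; apply/allpairsP; exists (x, y).
Qed.

Lemma GV_prod : is_GV d1 -> is_GV d2 -> is_GV d.
Proof.
move=> [ann1 hom1] [ann2 hom2]; split.
  move=> r rd; apply: ann2 => b hb; apply: ann1 => a ha.
  by rewrite -mulrA [b * a]mulrC; apply/rd/in_ideal_prod.
move=> phi phiL.
(* For b in <d2>, a |-> phi (a * b) is multiplication by some chi b, and chi
   is in turn multiplication by some r on <d2>. *)
have chi_ex b : exists r, in_ideal d2 b -> forall a, in_ideal d1 a -> phi (a * b) = r * a.
  have [hb|] := pselect (in_ideal d2 b); last by exists 0.
  have [|r Hr] := hom1 (fun a => phi (a * b)); last by exists r.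
  by move=> s a a' ha ha'; rewrite /= mulrDl -mulrA phiL //; exact: in_ideal_prod.
have [chi Hchi] := choice chi_ex.
have [|r Hr] := hom2 chi.
  move=> s b b' hb hb'; apply/eqP; rewrite -subr_eq0; apply/eqP; apply: ann1 => a ha.
  have hsb : in_ideal d2 (s * b + b') by apply: in_idealD => //; exact: in_idealMl.
  by rewrite mulrBl mulrDl -mulrA -!Hchi // mulrDr mulrCA phiL ?subrr //;
    exact: in_ideal_prod.
exists r => y hy; suff [] : in_ideal d y /\ phi y = r * y by [].
elim/in_ideal_ind: hy => [|x x' [hx ex] [hx' ex']|s x [hx ex]|_ /allpairsP [[a b] [ad bd ->]]].
- by rewrite (ideal_hom0 phiL) mulr0; split=> //; exact: in_ideal0.
- split; first exact: in_idealD.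
  by have := phiL 1 x x' hx hx'; rewrite !mul1r => ->; rewrite ex ex' mulrDr.
- split; first exact: in_idealMl.
  have := phiL s x 0 hx (in_ideal0 _); rewrite !addr0 (ideal_hom0 phiL) addr0 => ->.
  by rewrite ex mulrCA.
move: ad bd => /= /in_ideal_mem ha /in_ideal_mem hb.
by split; [exact: in_ideal_prod | rewrite Hchi // Hr // -mulrA [b * a]mulrC].
Qed.

End GVProduct.
End Ideals.

Section Torsion.
Variable R : comPzRingType.

Lemma in_tor_GV_linear (U V : lmodType R) (f : {linear U -> V}) x :
  in_tor_GV x -> in_tor_GV (f x).
Proof.
by case=> d [Gd Hd]; exists d; split=> // j /Hd; rewrite -linearZ_LR => ->; exact: linear0.
Qed.

Lemma short_exact_tor_GV_eq0 (N X Y : lmodType R) (i : {linear N -> X}) (p : {linear X -> Y}) :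
  short_exact i p -> GV_torsionfree N -> forall x, p x = 0 -> in_tor_GV x -> x = 0.
Proof.
move=> [i_inj [_ ker_p]] tfN x /ker_p [n ->] [d [Gd Hd]].
rewrite (tfN n) ?linear0 //; exists d; split=> // j /Hd.
by rewrite -linearZ_LR -(linear0 i) => /i_inj.
Qed.

End Torsion.

Section SubmodulesAndQuotients.
Variables (R : comPzRingType) (M : lmodType R) (S : M -> Prop).
Hypothesis S_submod : submod_pred S.

Definition submod_mem : pred M := fun x => `[< S x >].

Fact submod_mem_closed : submod_closed submod_mem.
Proof.
case: S_submod => S0 [SD SZ]; split; first exact/asboolP.
by move=> a x y /asboolP Sx /asboolP Sy; apply/asboolP/SD => //; exact: SZ.
Qed.
HB.instance Definition _ := GRing.isSubmodClosed.Build R M submod_mem submod_mem_closed.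

Inductive submod := Submod (x : M) of x \in submod_mem.
Definition submod_val (k : submod) := let: Submod x _ := k in x.
HB.instance Definition _ := [isSub for submod_val].
HB.instance Definition _ := [Choice of submod by <:].
HB.instance Definition _ := [SubChoice_isSubLmodule of submod by <:].

Lemma submod_exists : exists (K : lmodType R) (i : {linear K -> M}),
  injective i /\ forall x, S x <-> exists k, x = i k.
Proof.
exists submod, (val : submod -> M); split; first exact: val_inj.
move=> x; split=> [Sx|[[y Sy] ->]]; last exact/asboolP.
by exists (Submod (introT (asboolP _) Sx)).
Qed.

Local Open Scope quotient_scope.
Local Notation quot := (Quotient.quot (GRing.ZmodClosed.clone M submod_mem _)).

Definition quot_scale (a : R) (u : quot) : quot := \pi_quot (a *: repr u).

Lemma pi_scale a : {morph \pi_quot : x / a *: x >-> quot_scale a x}.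
Proof.
move=> x; apply/eqP; rewrite piE /Quotient.equiv -scalerBr rpredZ //.
by rewrite Quotient.idealrBE reprK.
Qed.
Canonical pi_scale_morph a := PiMorph1 (pi_scale a).

Fact quot_scaleA a b u : quot_scale a (quot_scale b u) = quot_scale (a * b) u.
Proof. by elim/quotW: u => x; rewrite !piE scalerA. Qed.
Fact quot_scale1 : left_id 1 quot_scale.
Proof. by elim/quotW => x; rewrite !piE scale1r. Qed.
Fact quot_scaleDr : right_distributive quot_scale +%R.
Proof. by move=> a; elim/quotW => x; elim/quotW => y; rewrite !piE scalerDr. Qed.
Fact quot_scaleDl u : {morph quot_scale^~ u : a b / a + b}.
Proof. by move=> a b; elim/quotW: u => x; rewrite !piE scalerDl. Qed.
HB.instance Definition _ := GRing.Zmodule_isLmodule.Build R quot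
  quot_scaleA quot_scale1 quot_scaleDr quot_scaleDl.

Fact pi_quot_linear : linear (\pi_quot : M -> quot).
Proof. by move=> a x y; rewrite !piE. Qed.

Lemma quotient_exists : exists (Q : lmodType R) (q : {linear M -> Q}),
  (forall y, exists x, q x = y) /\ forall x, q x = 0 <-> S x.
Proof.
exists quot, (mk_linear pi_quot_linear); split=> [u|x /=]; first by exists (repr u); exact: reprK.
have pi0 : \pi_quot 0 = 0 :> quot by exact: pi_zeror.
rewrite -pi0; split=> [/eqquotP|Sx]; first by rewrite /Quotient.equiv subr0 => /asboolP.
by apply/eqquotP; rewrite /Quotient.equiv subr0; exact/asboolP.
Qed.
End SubmodulesAndQuotients.

Section Projectives.
Variable R : comPzRingType.

Lemma projective_regular : projective_mod R^o.
Proof.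
move=> X Y p u p_surj; have [x1 px1] := p_surj (u 1).
have hL : linear (fun r : R^o => r *: x1) by move=> a r s; rewrite scalerDl scalerA.
exists (mk_linear hL) => r /=; rewrite linearZ_LR px1 -linearZ_LR.
by congr (u _); rewrite /GRing.scale /= mulr1.
Qed.

Lemma projective_prod (P1 P2 : lmodType R) :
  projective_mod P1 -> projective_mod P2 -> projective_mod (P1 * P2)%type.
Proof.
move=> P1proj P2proj X Y p u p_surj.
have [h1 Hh1] := P1proj X Y p (u \o lin_pair idfun \0) p_surj.
have [h2 Hh2] := P2proj X Y p (u \o lin_pair \0 idfun) p_surj.
exists ((h1 \o fst) \+ (h2 \o snd)) => -[x1 x2] /=; rewrite linearD Hh1 Hh2 /= -linearD.
by congr (u _); congr pair; rewrite ?addr0 ?add0r.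
Qed.

End Projectives.

(* monalg only equips [malg T R] with a module structure for nontrivial
   rings, so the scaling is defined here. *)
Section FreeModules.
Variables (R : comPzRingType) (T : choiceType).

Definition free := malg T R.
HB.instance Definition _ := GRing.Zmodule.on free.
Implicit Types (g : free).

Definition free_scale (c : R) g : free := \sum_(k <- msupp g) << c * g@_k *g k >>.

Lemma free_scaleE c g k : (free_scale c g)@_k = c * g@_k.
Proof.
rewrite {2}[g]monalgE !raddf_sum mulr_sumr.
by apply/eq_bigr => /= i _; rewrite !mcoeffU mulrnAr.
Qed.

Fact free_scaleA c1 c2 g : free_scale c1 (free_scale c2 g) = free_scale (c1 * c2) g.
Proof. by apply/malgP => k; rewrite !free_scaleE mulrA. Qed.
Fact free_scale1 : left_id 1 free_scale.
Proof. by move=> g; apply/malgP => k; rewrite free_scaleE mul1r. Qed.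
Fact free_scaleDr : right_distributive free_scale +%R.
Proof. by move=> c g g'; apply/malgP => k; rewrite !(mcoeffD, free_scaleE) mulrDr. Qed.
Fact free_scaleDl g : {morph free_scale^~ g : c1 c2 / c1 + c2}.
Proof. by move=> c1 c2; apply/malgP => k; rewrite !(mcoeffD, free_scaleE) mulrDl. Qed.
HB.instance Definition _ := GRing.Zmodule_isLmodule.Build R free
  free_scaleA free_scale1 free_scaleDr free_scaleDl.

Variables (V : lmodType R) (x : T -> V).

Definition free_lift g : V := \sum_(k <- msupp g) g@_k *: x k.

Lemma free_liftE g (D : {fset T}) :
  (msupp g `<=` D)%fset -> free_lift g = \sum_(k <- D) g@_k *: x k.
Proof.
move=> gD; rewrite /free_lift (big_fset_incl _ gD) // => k _ kg.
by rewrite mcoeff_outdom // scale0r.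
Qed.

Fact free_lift_linear : linear free_lift.
Proof.
move=> c g1 g2; set D := (msupp g1 `|` msupp g2 `|` msupp (c *: g1 + g2))%fset.
rewrite (@free_liftE (c *: g1 + g2) D); last by rewrite fsubsetUr.
rewrite (@free_liftE g1 D); last by rewrite /D -fsetUA fsubsetUl.
rewrite (@free_liftE g2 D); last by rewrite /D fsubsetU // fsubsetUr.
rewrite scaler_sumr -big_split /=; apply: eq_bigr => k _.
by rewrite mcoeffD free_scaleE scalerDl scalerA.
Qed.

End FreeModules.

Lemma projective_cover (R : comPzRingType) (M : lmodType R) :
  exists (F : lmodType R) (p : {linear F -> M}),
    projective_mod F /\ forall m, exists x, p x = m.
Proof.
pose lift (V : lmodType R) (x : M -> V) := mk_linear (@free_lift_linear R M V x).
have liftU (V : lmodType R) (x : M -> V) (c : R) m : lift V x << c *g m >> = c *: x m.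
  rewrite /= (@free_liftE _ _ _ _ _ [fset m]%fset) ?big_seq_fset1 ?mcoeffUU //.
  apply/fsubsetP => k; rewrite -mcoeff_neq0 mcoeffU in_fset1.
  by case: (m =P k) => [->|_]; rewrite ?eqxx // mulr0n eqxx.
exists (free R M), (lift M id); split=> [X Y p u p_surj|m]; last first.
  by exists << 1 *g m >>; rewrite liftU scale1r.
have [x Hx] := choice (fun m : M => p_surj (u << 1 *g m >>)).
exists (lift X x) => g; rewrite /= /free_lift linear_sum {3}[g]monalgE linear_sum.
apply: eq_bigr => k _; rewrite linearZ_LR Hx -linearZ_LR; congr (u _).
by apply/malgP => k'; rewrite free_scaleE !mcoeffU mulr_natr.
Qed.

Section Pushout.
Variable R : comPzRingType.

Lemma pushout_exists (K P L N : lmodType R) (i : {linear K -> P}) (p : {linear P -> L})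
    (phi : {linear K -> N}) :
  short_exact i p ->
  exists (X : lmodType R) (iota : {linear N -> X}) (nu : {linear P -> X})
    (rho : {linear X -> L}),
  [/\ short_exact iota rho, forall x, rho (nu x) = p x & forall k, nu (i k) = iota (phi k)].
Proof.
move=> [i_inj [p_surj ker_p]].
pose S (u : N * P) := exists k, u.1 = phi k /\ u.2 = - i k.
have S_submod : submod_pred S.
  split; first by exists 0; rewrite !linear0.
  split=> [u v [k [e1 e2]] [k' [e1' e2']]|a u [k [e1 e2]]].
    by exists (k + k'); rewrite (linearD phi) (linearD i) opprD -e1 -e2 -e1' -e2'.
  by exists (a *: k); rewrite (linearZ_LR phi) (linearZ_LR i) -scalerN -e1 -e2.
have [X [pi [pi_surj pi_ker]]] := quotient_exists S_submod.
have piP u v : pi u = pi v <-> S (u - v).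
  rewrite -pi_ker linearB; split=> [->|/eqP]; first by rewrite subrr.
  by rewrite subr_eq0 => /eqP.
have [rho rhoP] : exists rho : {linear X -> L}, forall u, rho (pi u) = p u.2.
  apply: (linear_factor_surj (F := p \o snd)) => // u /pi_ker [k [_ /= ->]].
  by rewrite linearN (_ : p (i k) = 0) ?oppr0 //; apply/ker_p; exists k.
pose iota := pi \o lin_pair idfun \0; pose nu := pi \o lin_pair \0 idfun.
exists X, iota, nu, rho; split=> [|x|k]; last 2 first.
- by rewrite rhoP.
- by apply/piP; exists (- k); rewrite /= !linearN opprK sub0r subr0.
split=> [n n' /piP [k [/= e1]]|].
  rewrite subr0 => /esym/eqP; rewrite oppr_eq0 -(linear0 i) => /eqP /i_inj k0.
  by apply/eqP; rewrite -subr_eq0 e1 k0 linear0.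
split=> [y|xi]; first by have [x <-] := p_surj y; exists (nu x); rewrite rhoP.
have [[n x] <-] := pi_surj xi; split=> [|[n' ->]]; last by rewrite rhoP linear0.
rewrite rhoP => /ker_p [k /= ->]; exists (n + phi k); apply/piP.
by exists (- k); rewrite /= !linearN opprK opprD addrA subrr sub0r subr0.
Qed.

End Pushout.

Section WModules.
Variable R : comPzRingType.

Lemma w_module_ideal_hom (N : lmodType R) (d : seq R) (theta : R -> N) :
  w_module N -> is_GV d ->
  (forall a x y, in_ideal d x -> in_ideal d y -> theta (a * x + y) = a *: theta x + theta y) ->
  exists n, forall j, in_ideal d j -> theta j = j *: n.
Proof.
move=> [_ wN] Gd thetaL.
have [Q [q [q_surj q_ker]]] := quotient_exists (in_ideal_submod d).
have [J [i [i_inj iJ]]] := submod_exists (in_ideal_submod d).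
have iq : proj_pres i q.
  split; last exact: projective_regular.
  by split=> //; split=> // r; rewrite q_ker; exact: iJ.
have thetaiL : linear (theta \o i).
  by move=> a x y; rewrite /= linearP; apply: thetaL; apply/iJ; eexists.
have [psi Hpsi] := wN d Gd Q q (conj q_surj q_ker) J R^o i q iq (mk_linear thetaiL).
by exists (psi 1) => _ /iJ [k ->]; rewrite -linearZ_LR [_ *: _]mulr1 Hpsi.
Qed.

End WModules.

Section LiftExtension.
Variables (R : comPzRingType) (N X Y Q L : lmodType R).
Variables (iota : {linear N -> X}) (rho : {linear X -> Y}).
Hypotheses (iota_rho : short_exact iota rho) (tfN : GV_torsionfree N) (wN : w_module N).
Variables (ell : {linear Q -> L}) (v : {linear L -> Y}) (sQ : {linear Q -> X}).
Hypothesis ell_inj : injective ell.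
Hypothesis L_GV : forall z, exists d, is_GV d /\ forall j, in_ideal d j -> exists y, ell y = j *: z.
Hypothesis rho_sQ : forall y, rho (sQ y) = v (ell y).

Let ker_rho_eq0 := short_exact_tor_GV_eq0 iota_rho tfN.

(* The value of the extension at z is pinned down by sQ on the multiples of z
   lying in Q: uniquely since ker rho is GV-torsionfree, and it exists since
   N is a w-module. *)
Let compatible z xi := rho xi = v z /\ forall j y, ell y = j *: z -> j *: xi = sQ y.

Lemma compatible_unique z xi xi' : compatible z xi -> compatible z xi' -> xi = xi'.
Proof.
move=> [rho_xi c_xi] [rho_xi' c_xi']; apply/eqP; rewrite -subr_eq0; apply/eqP/ker_rho_eq0.
  by rewrite linearB rho_xi rho_xi' subrr.
have [d [Gd Hd]] := L_GV z; exists d; split=> // j /Hd [y ey].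
by rewrite scalerBr (c_xi _ _ ey) (c_xi' _ _ ey) subrr.
Qed.

Lemma compatible_lincomb a z z' xi xi' :
  compatible z xi -> compatible z' xi' -> compatible (a *: z + z') (a *: xi + xi').
Proof.
move=> [rho_xi c_xi] [rho_xi' c_xi']; split; first by rewrite linearP rho_xi rho_xi' -linearP.
move=> j y ey; apply/eqP; rewrite -subr_eq0; apply/eqP.
set eta := _ - _.
(* [eta] lies in [ker rho] and is killed by [j2 * j1] for [j1], [j2] in the
   GV-ideals attached to [z] and [z']. *)
have rho_eta : rho eta = 0.
  rewrite linearB (linearZ_LR rho) linearP rho_xi rho_xi' rho_sQ ey.
  by rewrite (linearZ_LR v) linearP subrr.
apply: (ker_rho_eq0 rho_eta).
have [d [Gd Hd]] := L_GV z; exists d; split=> // j1 /Hd [y1 ey1].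
apply: ker_rho_eq0; first by rewrite (linearZ_LR rho) rho_eta scaler0.
have [d' [Gd' Hd']] := L_GV z'; exists d'; split=> // j2 /Hd' [y2 ey2].
have -> : j2 *: (j1 *: eta) = sQ ((a * j * j2) *: y1 + (j * j1) *: y2 - (j1 * j2) *: y).
  rewrite (linearB sQ) (linearD sQ) !(linearZ_LR sQ) -(c_xi _ _ ey1) -(c_xi' _ _ ey2) /eta.
  by rewrite !(scalerBr, scalerDr, scalerA); congr (_ *: _ + _ *: _ - _ *: _); ring.
suff -> : (a * j * j2) *: y1 + (j * j1) *: y2 - (j1 * j2) *: y = 0 by rewrite linear0.
apply: ell_inj; rewrite linear0 (linearB ell) (linearD ell) !(linearZ_LR ell) ey1 ey2 ey.
rewrite !(scalerDr, scalerA).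
have -> : j1 * j2 * j * a = a * j * j2 * j1 by ring.
have -> : j1 * j2 * j = j * j1 * j2 by ring.
by rewrite subrr.
Qed.

Lemma compatible_exists z : exists xi, compatible z xi.
Proof.
(* Fix x0 over [v z]; the defect theta j of x0 at j in <d> is J-linear, hence
   multiplication by some n0, and x0 + iota n0 is compatible. *)
have [d [Gd Hd]] := L_GV z; have [x0 rho_x0] := iota_rho.2.1 (v z).
have theta_ex j : exists n, in_ideal d j -> forall y, ell y = j *: z -> iota n = sQ y - j *: x0.
  have [hj|] := pselect (in_ideal d j); last by exists 0.
  have [y0 ey0] := Hd j hj.
  have [n en] : exists n, sQ y0 - j *: x0 = iota n.
    by apply/iota_rho.2.2; rewrite linearB linearZ_LR rho_sQ ey0 rho_x0 linearZ_LR subrr.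
  by exists n => _ y ey; rewrite (ell_inj (etrans ey (esym ey0))) en.
have [theta Htheta] := choice theta_ex.
have [n0 Hn0] : exists n0, forall j, in_ideal d j -> theta j = j *: n0.
  apply: w_module_ideal_hom => // a x x' hx hx'.
  have [y ey] := Hd x hx; have [y' ey'] := Hd x' hx'.
  have hax : in_ideal d (a * x + x') by apply: in_idealD => //; exact: in_idealMl.
  apply: iota_rho.1; rewrite (Htheta _ hax (a *: y + y')); last first.
    by rewrite linearP ey ey' scalerA scalerDl.
  rewrite [RHS]linearP (Htheta _ hx _ ey) (Htheta _ hx' _ ey') linearP scalerDl -scalerA.
  by rewrite scalerBr addrACA opprD.
pose xi := x0 + iota n0.
have rho_xi : rho xi = v z.
  by rewrite linearD rho_x0 (_ : rho (iota n0) = 0) ?addr0 //; apply/iota_rho.2.2; exists n0.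
exists xi; split=> // j y ey; apply/eqP; rewrite -subr_eq0; apply/eqP/ker_rho_eq0.
  by rewrite linearB linearZ_LR rho_xi rho_sQ ey linearZ_LR subrr.
exists d; split=> // j' hj'; have [y' ey'] := Hd j' hj'.
have xi_j' : j' *: xi = sQ y'.
  by rewrite scalerDr -linearZ_LR -(Hn0 _ hj') (Htheta _ hj' _ ey') addrC subrK.
rewrite scalerBr scalerA mulrC -scalerA xi_j' -!linearZ_LR -linearB.
suff -> : j *: y' - j' *: y = 0 by rewrite linear0.
by apply: ell_inj; rewrite linearB !(linearZ_LR ell) ey ey' !scalerA mulrC subrr linear0.
Qed.

Lemma extend_lift : exists sL : {linear L -> X}, forall z, rho (sL z) = v z.
Proof.
have [sL HsL] := choice compatible_exists.
have sL_lin : linear sL.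
  by move=> a z z'; apply: compatible_unique (HsL _) (compatible_lincomb a (HsL z) (HsL z')).
by exists (mk_linear sL_lin) => z; case: (HsL z).
Qed.

End LiftExtension.

Section ScaledSplittings.
Variable R : comPzRingType.

Definition scale_factors_projective (M : lmodType R) (c : R) : Prop :=
  exists (P : lmodType R) (alpha : {linear M -> P}) (beta : {linear P -> M}),
    projective_mod P /\ forall m, beta (alpha m) = c *: m.

Lemma w_splitP (M : lmodType R) :
  w_split M <-> exists d, is_GV d /\ forall x, x \in d -> scale_factors_projective M x.
Proof.
split=> [[_ [P [_ [g [_ [Pproj [d [Gd [h Hh]]]]]]]]]|[d [Gd dM]]].
  exists d; split=> // x xd; rewrite -(nth_index 0 xd).
  by exists P, (h (Ordinal (etrans (index_mem x d) xd))), g.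
have [F [p [Fproj p_surj]]] := projective_cover M.
have h_ex (k : 'I_(size d)) : exists h : {linear M -> F}, forall m, p (h m) = d`_k *: m.
  have [P [alpha [beta [Pproj Hab]]]] := dM _ (mem_nth 0 (ltn_ord k)).
  have [tau Htau] := Pproj _ _ p beta p_surj.
  by exists (tau \o alpha) => m; rewrite /= Htau Hab.
have [h Hh] := choice h_ex.
have [K [i [i_inj ker_p]]] := submod_exists (ker_submod p).
exists K, F, i, p; split; last by split=> //; exists d; split=> //; exists h.
by split=> //; split.
Qed.

Lemma scaled_lift (M X Y : lmodType R) (c : R) (rho : {linear X -> Y}) (u : {linear M -> Y}) :
  scale_factors_projective M c -> (forall y, exists x, rho x = y) ->
  exists s : {linear M -> X}, forall m, rho (s m) = c *: u m.
Proof.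
move=> [P [alpha [beta [Pproj Hab]]]] rho_surj.
have [tau Htau] := Pproj _ _ rho (u \o beta) rho_surj.
by exists (tau \o alpha) => m; rewrite /= Htau /= Hab linearZ_LR.
Qed.

Section ShortExact.
Variables (A B C : lmodType R) (f : {linear A -> B}) (g : {linear B -> C}).
Hypothesis fg : short_exact f g.

Lemma scaled_retraction c : scale_factors_projective C c ->
  exists (rho : {linear B -> A}) (P : lmodType R) (sigma : {linear B -> P})
    (tau : {linear P -> B}),
  [/\ projective_mod P, forall a, rho (f a) = c *: a
    & forall b, f (rho b) + tau (sigma b) = c *: b].
Proof.
move=> [P [alpha [beta [Pproj Hab]]]]; case: fg => f_inj [g_surj ker_g].
have [tau Htau] := Pproj _ _ g beta g_surj.
have [rho Hrho] : exists rho : {linear B -> A},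
    forall b, f (rho b) = (( *:%R c) \- (tau \o (alpha \o g))) b.
  apply: (linear_factor_inj f_inj) => b; apply: (ker_g _).1.
  by rewrite /= linearB Htau Hab linearZ_LR subrr.
exists rho, P, (alpha \o g), tau; split=> // [a|b]; last by rewrite Hrho /= subrK.
apply: f_inj; rewrite Hrho /= linearZ_LR (_ : g (f a) = 0) ?linear0 ?addr0 //.
by apply/ker_g; exists a.
Qed.

Lemma scale_factors_projective_mid a c :
  scale_factors_projective A a -> scale_factors_projective C c ->
  scale_factors_projective B (a * c).
Proof.
move=> [PA [alpha [beta [PAproj Hab]]]] /scaled_retraction [rho [P [sigma [tau [Pproj _ Hrho]]]]].
exists (PA * P)%type, (lin_pair (alpha \o rho) (a \*: sigma)),
  ((f \o beta \o fst) \+ (tau \o snd)); split; first exact: projective_prod.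
by move=> b /=; rewrite Hab !linearZ_LR -scalerDr Hrho scalerA.
Qed.

Lemma scale_factors_projective_sub b c :
  scale_factors_projective B b -> scale_factors_projective C c ->
  scale_factors_projective A (b * c).
Proof.
move=> [PB [alpha [beta [PBproj Hab]]]] /scaled_retraction [rho [_ [_ [_ [_ Hrho _]]]]].
by exists PB, (alpha \o f), (rho \o beta); split=> // x; rewrite /= Hab linearZ_LR Hrho scalerA.
Qed.

End ShortExact.

Lemma w_split_mul (X C Y : lmodType R) :
  (forall x c, scale_factors_projective X x -> scale_factors_projective C c ->
     scale_factors_projective Y (x * c)) ->
  w_split X -> w_split C -> w_split Y.
Proof.
move=> XCY /w_splitP [dX [GX HX]] /w_splitP [dC [GC HC]]; apply/w_splitP.
exists [seq x * c | x <- dX, c <- dC]; split; first exact: GV_prod.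
by move=> _ /allpairsP [[x c] [/= xd cd ->]]; apply: XCY; [apply: HX | apply: HC].
Qed.

End ScaledSplittings.

Section WProjective.
Variable R : comPzRingType.

Lemma is_LM_embedding (M Q E L : lmodType R) (q : {linear M -> Q})
    (e : {linear Q -> E}) (l : {linear L -> E}) :
  is_LM q e l -> exists ell : {linear Q -> L}, injective ell /\
    forall z, exists d, is_GV d /\ forall j, in_ideal d j -> exists y, ell y = j *: z.
Proof.
case=> _ [_ [[_ [e_inj _]] [l_inj Hl]]].
have [ell Hell] : exists ell : {linear Q -> L}, forall y, l (ell y) = e y.
  apply: (linear_factor_inj l_inj) => y; apply/Hl; exists [:: 1]; split; first exact: GV_one.
  by move=> j _; exists (j *: y); rewrite linearZ_LR.
exists ell; split=> [y y' /(congr1 l)|z]; first by rewrite !Hell => /e_inj.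
have [d [Gd Hd]] := (Hl (l z)).1 (ex_intro _ z erefl).
exists d; split=> // j /Hd [y ey]; exists y; apply: l_inj.
by rewrite Hell -ey linearZ_LR.
Qed.

Lemma scaled_extension_of_section (K P L N X : lmodType R) (i : {linear K -> P})
    (p : {linear P -> L}) (phi : {linear K -> N}) (iota : {linear N -> X})
    (nu : {linear P -> X}) (rho : {linear X -> L}) (c : R) (s : {linear L -> X}) :
  short_exact i p -> short_exact iota rho ->
  (forall x, rho (nu x) = p x) -> (forall k, nu (i k) = iota (phi k)) ->
  (forall z, rho (s z) = c *: z) ->
  exists psi : {linear P -> N}, forall k, psi (i k) = c *: phi k.
Proof.
move=> [_ [_ ker_p]] [iota_inj [_ ker_rho]] rho_nu nu_i rho_s.
have [psi Hpsi] : exists psi : {linear P -> N}, forall x, iota (psi x) = ((c \*: nu) \- (s \o p)) x.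
  apply: (linear_factor_inj iota_inj) => x; apply/ker_rho.
  by rewrite /= linearB linearZ_LR rho_nu rho_s subrr.
exists psi => k; apply: iota_inj; rewrite Hpsi /= nu_i (_ : p (i k) = 0).
  by rewrite linear0 subr0 linearZ_LR.
by apply/ker_p; exists k.
Qed.

Lemma scaled_extension_LM (M Q E L N K P : lmodType R) (q : {linear M -> Q})
    (e : {linear Q -> E}) (l : {linear L -> E}) (i : {linear K -> P})
    (p : {linear P -> L}) (c : R) :
  scale_factors_projective M c -> is_LM q e l -> GV_torsionfree N -> w_module N ->
  proj_pres i p ->
  forall phi : {linear K -> N}, exists psi : {linear P -> N}, forall k, psi (i k) = c *: phi k.
Proof.
move=> Mc LM tfN wN [ip _] phi.
have [ell [ell_inj L_GV]] := is_LM_embedding LM.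
have [X [iota [nu [rho [iota_rho rho_nu nu_i]]]]] := pushout_exists phi ip.
have [sM HsM] := scaled_lift (ell \o q) Mc iota_rho.2.1.
have [sQ HsQ] : exists sQ : {linear Q -> X}, forall m, sQ (q m) = sM m.
  case: LM => q_surj [q_ker _]; apply: linear_factor_surj => // m qm.
  apply: (short_exact_tor_GV_eq0 iota_rho tfN); first by rewrite HsM /= qm linear0 scaler0.
  by apply: in_tor_GV_linear; apply/q_ker.
have [|sL HsL] := extend_lift iota_rho tfN wN ell_inj L_GV (v := *:%R c) (sQ := sQ).
  by move=> y; have [m <-] := LM.1 y; rewrite HsQ HsM.
exact: scaled_extension_of_section ip iota_rho rho_nu nu_i HsL.
Qed.

Lemma w_split_w_projective (M : lmodType R) : w_split M -> w_projective M.
Proof.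
move=> /w_splitP [d [Gd dM]] Q E L q e l LM N tfN wN K P i p ip phi.
exists d; split=> //.
apply: in_ideal_ind => [|j j' [psi Hpsi] [psi' Hpsi']|r j [psi Hpsi]|j /dM jM].
- by exists \0 => k; rewrite scale0r.
- by exists (psi \+ psi') => k; rewrite /= Hpsi Hpsi' scalerDl.
- by exists (r \*: psi) => k; rewrite /= Hpsi scalerA.
- exact: scaled_extension_LM jM LM tfN wN ip phi.
Qed.

End WProjective.

Theorem corollary2p6 (R : comPzRingType) :
  (forall M : lmodType R, w_split M -> w_projective M) /\
  (forall (A B C : lmodType R) (f : {linear A -> B}) (g : {linear B -> C}),
     short_exact f g -> w_split C -> (w_split A <-> w_split B)).
Proof.
split=> [M|A B C f g fg wC]; first exact: w_split_w_projective.
split=> [wA|wB].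
- exact: w_split_mul (scale_factors_projective_mid fg) wA wC.
- exact: w_split_mul (scale_factors_projective_sub fg) wB wC.
Qed.
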